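(* Let $K$ be a fractal gasket with $\omega_\alpha,\omega_\beta\in K$. If $K$ satisfies the top isolated condition or $\omega_\gamma\notin K$, then every nontrivial connected component of $K$ (one containing more than one point) is a line segment. If in addition $\alpha$ and $\beta$ are not in the same horizontal block, then $K$ is totally disconnected.
   Context: Let $\Delta\subset\mathbb R^2$ be the triangle with vertices $\omega_\alpha=(0,0)$, $\omega_\beta=(1,0)$, $\omega_\gamma=(1/2,\sqrt3/2)$. A fractal gasket is the attractor $K$ of $\{\varphi_j(z)=r_j(z+d_j)\}_{j=1}^N$, $r_j\in(0,1)$, $d_j\in\mathbb R^2$, with $\bigcup_j\varphi_j(\Delta)\subset\Delta$ and, for $i\ne j$, $\varphi_i(\Delta)\cap\varphi_j(\Delta)$ consisting only of common vertices. $\Sigma=\{1,\dots,N\}$; when $\omega_\alpha\in K$, $\alpha\in\Sigma$ is the index with $\varphi_\alpha((0,0))=(0,0)$, and when $\omega_\beta\in K$, $\beta\in\Sigma$ is the index with $\varphi_\beta((1,0))=(1,0)$; $\gamma=-3$ if $\omega_\gamma\notin K$, otherwise $\varphi_\gamma(\omega_\gamma)=\omega_\gamma$. Top isolated condition: $\omega_\gamma\in K$ and $\varphi_\gamma(\Delta)\cap\varphi_j(\Delta)=\emptyset$ for all $j\ne\gamma$. A horizontal block is a set $I=\{i_1,\dots,i_k\}\subset\Sigma$ with $\varphi_{i_j}(\omega_\beta)=\varphi_{i_{j+1}}(\omega_\alpha)$ for $1\le j\le k-1$, maximal with this property. *)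

From mathcomp Require Import all_boot all_order all_algebra.
From mathcomp Require Import all_classical all_reals all_analysis.
Set Implicit Arguments. Unset Strict Implicit. Unset Printing Implicit Defensive.
Import Order.TTheory GRing.Theory Num.Theory numFieldNormedType.Exports.
Local Open Scope classical_set_scope.
Local Open Scope ring_scope.

Section Gasket.
Variable R : realType.

Local Notation pt := (R * R)%type.

Definition om_a : pt := (0, 0).
Definition om_b : pt := (1, 0).
Definition om_g : pt := (2^-1, Num.sqrt 3 / 2).

Definition Delta : set pt :=
  [set z | exists a b c : R, [/\ 0 <= a, 0 <= b, 0 <= c, a + b + c = 1 &
     z = (a * om_a.1 + b * om_b.1 + c * om_g.1,
          a * om_a.2 + b * om_b.2 + c * om_g.2)]].

Definition phi (N : nat) (r : 'I_N -> R) (d : 'I_N -> pt) (j : 'I_N) (z : pt) : pt :=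
  (r j * (z.1 + (d j).1), r j * (z.2 + (d j).2)).

Definition vertices (f : pt -> pt) : set pt := [set f om_a; f om_b; f om_g].

Definition gasket_IFS (N : nat) (r : 'I_N -> R) (d : 'I_N -> pt) : Prop :=
  [/\ forall j, 0 < r j < 1,
      forall j, phi r d j @` Delta `<=` Delta &
      forall i j, i != j ->
        (phi r d i @` Delta) `&` (phi r d j @` Delta)
          `<=` vertices (phi r d i) `&` vertices (phi r d j)].

Definition is_attractor (N : nat) (r : 'I_N -> R) (d : 'I_N -> pt) (K : set pt) : Prop :=
  [/\ compact K, K !=set0 & K = \bigcup_(j in [set: 'I_N]) (phi r d j @` K)].

Definition top_isolated (N : nat) (r : 'I_N -> R) (d : 'I_N -> pt) (K : set pt) : Prop :=
  K om_g /\ exists g : 'I_N, phi r d g om_g = om_g /\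
    forall j, j != g -> (phi r d g @` Delta) `&` (phi r d j @` Delta) = set0.

Definition hnext (N : nat) (r : 'I_N -> R) (d : 'I_N -> pt) : rel 'I_N :=
  fun i j => phi r d i om_b == phi r d j om_a.

Definition hchain (N : nat) (r : 'I_N -> R) (d : 'I_N -> pt) (s : seq 'I_N) : Prop :=
  uniq s /\ sorted (hnext r d) s.

Definition horizontal_block (N : nat) (r : 'I_N -> R) (d : 'I_N -> pt) (I : set 'I_N) : Prop :=
  (exists s, hchain r d s /\ I = [set i | i \in s]) /\
  (forall s', hchain r d s' -> I `<=` [set i | i \in s'] -> [set i | i \in s'] `<=` I).

Definition same_horizontal_block (N : nat) (r : 'I_N -> R) (d : 'I_N -> pt) (i j : 'I_N) : Prop :=
  exists I, horizontal_block r d I /\ I i /\ I j.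

Definition line_segment (S : set pt) : Prop :=
  exists p q : pt, p != q /\
    S = [set z | exists t : R, [/\ 0 <= t, t <= 1 &
          z = ((1 - t) * p.1 + t * q.1, (1 - t) * p.2 + t * q.2)]].

End Gasket.

From mathcomp Require Import all_boot all_order all_algebra.
From mathcomp Require Import all_classical all_reals all_analysis.
From mathcomp Require Import ring lra.
Set Implicit Arguments. Unset Strict Implicit. Unset Printing Implicit Defensive.
Import Order.TTheory GRing.Theory Num.Theory numFieldNormedType.Exports.
Local Open Scope classical_set_scope.
Local Open Scope ring_scope.

(* Distinct first-level copies of [Delta] meet only at vertices, hence so do
   distinct copies of the same level n.  Cut [K] into finitely many compact
   pieces [X i] with representative points [rep i], such that meeting pieces
   have the same representative and a vertex of [Delta] lying in [X i] has the
   same value as [rep i] under a linear functional [l].  Label the level-n cell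
   [phi_w (X i)] by [l (phi_w (rep i))]: meeting cells carry the same label, so
   a connected subset of [K] lies in the cells of one label; as [l] varies by
   O(rmax^n) on a cell, [l] is constant on connected subsets of [K].
   With the images of [K] under the top maps and under the other maps as
   pieces and [l] the height, every component is horizontal, hence a segment.
   With the second-level pieces, represented by [oa], [ob] or [og] according
   as they hang on the horizontal chain of [alpha], on that of [beta] or on
   neither, both coordinates are constant, so components are points; the two
   chains differ when [alpha] and [beta] are in different horizontal blocks. *)

Lemma connected_cover_label (T : topologicalType) (I : finType) (L : Type)
    (F : I -> set T) (lab : I -> L) (C : set T) i0 p q :
  (forall i, closed (F i)) -> (forall i j z, F i z -> F j z -> lab i = lab j) ->
  connected C -> C `<=` \bigcup_i F i -> C p -> F i0 p -> C q ->
  exists2 i, F i q & lab i = lab i0.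
Proof.
move=> F_closed lab_contact Cconn CF Cp Fp Cq.
pose U := \bigcup_(i in [set i | lab i = lab i0]) F i.
pose V := \bigcup_(i in [set i | lab i <> lab i0]) F i.
have union_closed A : closed (\bigcup_(i in A) F i).
  by apply: closed_bigcup => // *; exact: finite_finset.
have UV0 : U `&` V = set0.
  apply/seteqP; split => // z [[i /= li Fi] [j /= lj Fj]].
  by apply: lj; rewrite -li; exact: lab_contact Fj Fi.
have sepUV : separated U V.
  rewrite /separated -!(closure_id _).1; try exact: union_closed.
  by rewrite UV0.
have CUV : C `<=` U `|` V.
  move=> z /CF [i _ Fi].
  by have [li|li] := pselect (lab i = lab i0); [left|right]; exists i.
have Up : U p by exists i0.
case: (connected_subset sepUV CUV Cconn) => [/(_ q Cq) [i /= li Fi]|CV].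
  by exists i.
have : (U `&` V) p by split => //; exact: CV.
by rewrite UV0.
Qed.

Lemma le0_geometric (R : realType) (c M x : R) :
  0 <= c -> c < 1 -> (forall n, x <= c ^+ n * M) -> x <= 0.
Proof.
move=> c_ge0 c_lt1 xle; rewrite leNgt; apply/negP => x_gt0.
have M_ge0 : 0 <= M.
  by have := xle 0%N; rewrite expr0 mul1r => /(lt_le_trans x_gt0)/ltW.
have M1_gt0 : 0 < M + 1 by rewrite ltr_wpDl.
have [n cn] : exists n, c ^+ n < x / (M + 1).
  have c_norm : `|c| < 1 by rewrite ger0_norm.
  have /cvgr_dist_lt /(_ _ (divr_gt0 x_gt0 M1_gt0)) [m _ /(_ m (leqnn m))] :=
    cvg_geometric 1 c_norm.
  by rewrite /geometric /= mul1r sub0r normrN ger0_norm ?exprn_ge0 //; exists m.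
have cn_ge0 : 0 <= c ^+ n by rewrite exprn_ge0.
have := xle n; rewrite ltr_pdivlMr // in cn.
have : c ^+ n * M <= c ^+ n * (M + 1) by rewrite ler_wpM2l // lerDl.
lra.
Qed.

Lemma compact_sup_mem (R : realType) (A : set R) : A !=set0 -> compact A -> A (sup A).
Proof.
move=> A0 Ac; have [_ A_ub] := compact_has_sup A0 Ac.
have Acl : closed A by apply: compact_closed => //; exact: Rhausdorff.
by move: (closure_sup A0 A_ub); rewrite -(closure_id A).1.
Qed.

Lemma compact_min_max (R : realType) (A : set R) : A !=set0 -> compact A ->
  exists m M, [/\ A m, A M & forall a, A a -> m <= a <= M].
Proof.
move=> A0 Ac; pose B := -%R @` A.
have B0 : B !=set0 by case: A0 => a Aa; exists (- a), a.
have Bc : compact B.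
  by apply: continuous_compact => //; apply: continuous_subspaceT => a; exact: continuousN.
have [_ A_ub] := compact_has_sup A0 Ac; have [_ B_ub] := compact_has_sup B0 Bc.
exists (- sup B), (sup A); split; last first.
- move=> a Aa; rewrite lerNl !sup_upper_bound //; by exists a.
- exact: compact_sup_mem.
- by have [a Aa <-] := compact_sup_mem B0 Bc; rewrite opprK.
Qed.

Lemma horizontal_continuum_segment (R : realType) (C : set (R * R)) x y :
  compact C -> connected C -> (forall z, C z -> z.2 = x.2) -> C x -> C y -> y != x ->
  line_segment C.
Proof.
move=> Cc Cconn C_hor Cx Cy yx.
pose S := fst @` C.
have fst_cont : {within C, continuous fst}.
  by apply: continuous_subspaceT => z; exact: cvg_fst.
have S_int : is_interval S.
  by apply/connected_intervalP; exact: connected_continuous_connected.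
have [m [M [Sm SM mSM]]] : exists m M, [/\ S m, S M & forall a, S a -> m <= a <= M].
  by apply: compact_min_max; [exists x.1, x|exact: continuous_compact].
have CE z : C z <-> S z.1 /\ z.2 = x.2.
  split=> [Cz|[[w Cw wz] zx]]; first by split; [exists z|exact: C_hor].
  by rewrite [z]surjective_pairing -wz zx -(C_hor _ Cw) -surjective_pairing.
have mM : m < M.
  have /andP[mx xM] := mSM _ (ex_intro2 _ _ x Cx erefl).
  have /andP[my yM] := mSM _ (ex_intro2 _ _ y Cy erefl).
  rewrite lt_neqAle (le_trans mx xM) andbT; apply: contraNneq yx => mMe.
  apply/eqP; rewrite [x]surjective_pairing [y]surjective_pairing (C_hor _ Cy); congr pair; lra.
exists (m, x.2), (M, x.2); split; first by apply/eqP => -[] /eqP; rewrite lt_eqF.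
apply/seteqP; split=> z.
- move=> /CE[Sz zx]; have /andP[mz zM] := mSM _ Sz.
  exists ((z.1 - m) / (M - m)); split.
  + by rewrite divr_ge0 ?subr_ge0 // ltW.
  + by rewrite ler_pdivrMr ?subr_gt0 // mul1r lerD2r.
  + by rewrite [z]surjective_pairing zx /=; congr pair; [field; rewrite subr_eq0 gt_eqF|ring].
- case=> t [t0 t1 ->]; apply/CE; split; last by rewrite /=; ring.
  by apply: (S_int m M) => //=; apply/andP; split; nra.
Qed.

Lemma connect_last_edge (T : finType) (e : rel T) x y : connect e x y -> x != y ->
  exists2 z, connect e x z & e z y.
Proof.
case/connectP => p; elim/last_ind: p => [|p z _] /=; first by move=> _ ->; rewrite eqxx.
rewrite rcons_path last_rcons => /andP[xp pz] -> _.
by exists (last x p) => //; apply/connectP; exists p.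
Qed.

Lemma connect_same_horizontal_block (R : realType) (N : nat) (r : 'I_N -> R)
    (d : 'I_N -> (R * R)%type) a b :
  connect (hnext r d) a b -> same_horizontal_block r d a b.
Proof.
(* A longest [hnext]-chain through [a] and [b] is maximal, i.e. a block. *)
case/connectP => p /shortenP[p' p'_path p'_uniq _] ->.
pose P n := exists s, [/\ hchain r d s, a \in s, last a p' \in s & size s = n].
have P_ex : exists n, `[< P n >].
  exists (size (a :: p')); apply/asboolP; exists (a :: p').
  by split => //; [rewrite mem_head|exact: mem_last].
have P_bound n : `[< P n >] -> (n <= N)%N.
  move=> /asboolP [s [[s_uniq _] _ _ <-]].
  by have := uniq_leq_size s_uniq (fun i _ => mem_enum 'I_N i); rewrite size_enum_ord.
case: (ex_maxnP P_ex P_bound) => m /asboolP [s [s_chain sa sb <-]] s_max.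
exists [set i | i \in s]; split; last by split.
split; first by exists s.
move=> s' s'_chain sub z zs'.
have s'_size : (size s' <= size s)%N.
  by apply: s_max; apply/asboolP; exists s'; split => //; apply: sub.
have [_ ss'] := uniq_min_size s_chain.1 (fun i => sub i) s'_size.
by rewrite /= ss'.
Qed.

Section Triangle.
Variable R : realType.
Local Notation pt := (R * R)%type.
Local Notation oa := (om_a R).
Local Notation ob := (om_b R).
Local Notation og := (om_g R).
Local Notation s3 := (Num.sqrt (3 : R)).
Local Notation vertex := (vertices (@id pt)).
Local Notation Delta := (@Delta R).

Lemma s3_gt0 : 0 < s3. Proof. by rewrite sqrtr_gt0 ltr0n. Qed.
Lemma s3_sqr : s3 * s3 = 3. Proof. by rewrite -expr2 sqr_sqrtr // ler0n. Qed.

Definition lin (a b : R) (z : pt) : R := a * z.1 + b * z.2.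

Definition hom (rho : R) (t z : pt) : pt := rho *: z + t.

Lemma homE rho t z : hom rho t z = (rho * z.1 + t.1, rho * z.2 + t.2).
Proof. by []. Qed.

Lemma lin_hom a b rho t z : lin a b (hom rho t z) = rho * lin a b z + lin a b t.
Proof. by rewrite /lin homE /=; ring. Qed.

Lemma hom_inj rho t : 0 < rho -> injective (hom rho t).
Proof. by move=> rho_gt0 z z' /addIr /(scalerI (lt0r_neq0 rho_gt0)). Qed.

Lemma hom_fixed_unique rho t x y : rho != 1 -> hom rho t x = x -> hom rho t y = y -> x = y.
Proof.
move=> rho_neq1 hx hy; apply/eqP; rewrite -subr_eq0.
have : (1 - rho) *: (x - y) == 0.
  rewrite scalerBl scale1r -{1}hx -{1}hy /hom [rho *: y + t]addrC addrKA.
  by rewrite scalerBr subrr.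
by rewrite scaler_eq0 !subr_eq0 eq_sym (negbTE rho_neq1).
Qed.

Lemma hom_continuous rho t : continuous (hom rho t).
Proof. by move=> z; apply: continuousD; [exact: continuousZr|exact: cvg_cst]. Qed.

Lemma hom_compact rho t X : compact X -> compact (hom rho t @` X).
Proof.
move=> Xc; apply: continuous_compact => //.
by apply: continuous_subspaceT; exact: hom_continuous.
Qed.

Lemma DeltaP z :
  Delta z <-> [/\ 0 <= z.2, z.2 <= s3 * z.1 & z.2 <= s3 * (1 - z.1)].
Proof.
have s3_pos := s3_gt0; have s3_neq0 : s3 != 0 by rewrite gt_eqF.
split.
- case=> a [b [c [a0 b0 c0 abc ->]]] /=; rewrite /om_a /om_b /om_g /=.
  by split; nra.
- case=> h1 h2 h3.
  exists (1 - z.1 - z.2 / s3), (z.1 - z.2 / s3), (2 * z.2 / s3); split.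
  + rewrite -(pmulr_rge0 _ s3_pos) mulrBr mulrBr mulrCA divff // mulr1 mulr1; lra.
  + rewrite -(pmulr_rge0 _ s3_pos) mulrBr mulrCA divff // mulr1; lra.
  + by rewrite divr_ge0 // ?mulr_ge0 // ltW.
  + ring.
  + by case: z h1 h2 h3 => x y /= *; rewrite /om_a /om_b /om_g /=; congr (_, _); field.
Qed.

Lemma Delta_box z : Delta z -> [/\ 0 <= z.1, z.1 <= 1, 0 <= z.2 & z.2 <= 1].
Proof.
move=> /DeltaP [h1 h2 h3]; have s3_pos := s3_gt0; have s3s := s3_sqr.
have : s3 <= 2 by nra.
split; nra.
Qed.

Lemma Delta_lin_dist a b u v : Delta u -> Delta v ->
  `|lin a b u - lin a b v| <= `|a| + `|b|.
Proof.
move=> /Delta_box[u1 u1' u2 u2'] /Delta_box[v1 v1' v2 v2'].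
have -> : lin a b u - lin a b v = a * (u.1 - v.1) + b * (u.2 - v.2) by rewrite /lin; ring.
rewrite (le_trans (ler_normD _ _)) // !normrM lerD //.
- by rewrite ler_piMr // ler_norml; apply/andP; split; lra.
- by rewrite ler_piMr // ler_norml; apply/andP; split; lra.
Qed.

Lemma oa_vertex : vertex oa. Proof. by left; left. Qed.
Lemma ob_vertex : vertex ob. Proof. by left; right. Qed.
Lemma og_vertex : vertex og. Proof. by right. Qed.

Lemma vertex_neq : [/\ oa != ob, oa != og & ob != og].
Proof.
have s3_pos := s3_gt0.
rewrite /om_a /om_b /om_g; split; apply/eqP; case.
- by move/eqP; rewrite eq_sym oner_eq0.
- by move=> _ /eqP; rewrite eq_sym mulf_eq0 gt_eqF //= invr_eq0 pnatr_eq0.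
- by move=> _ /eqP; rewrite eq_sym mulf_eq0 gt_eqF //= invr_eq0 pnatr_eq0.
Qed.

Lemma vertex_Delta c : vertex c -> Delta c.
Proof.
have s3_pos := s3_gt0.
case=> [[->|->]|->]; apply/DeltaP;
  rewrite /om_a /om_b /om_g /= ?(mulr0, subr0, subrr, mulr1) //.
have -> : 1 - 2^-1 = 2^-1 :> R by field.
by split.
Qed.

Lemma verticesE (f : pt -> pt) : vertices f = f @` vertex.
Proof.
apply/seteqP; split=> x.
- case=> [[->|->]|->]; [exists oa|exists ob|exists og] => //.
  + exact: oa_vertex.
  + exact: ob_vertex.
  + exact: og_vertex.
- by case=> c [[->|->]|->] <-; [left; left|left; right|right].
Qed.

Lemma vertex_exposed c : vertex c -> exists a b,
  (forall z, Delta z -> lin a b c <= lin a b z) /\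
  (forall z, Delta z -> lin a b z = lin a b c -> z = c).
Proof.
have s3_pos := s3_gt0.
case=> [[->|->]|->]; rewrite /lin /om_a /om_b /om_g /=.
- exists s3, 1; split=> -[x y] /DeltaP [/= h1 h2 h3]; first nra.
  by rewrite !(mulr0, mulr1, addr0) => e; congr pair; nra.
- exists (- s3), 1; split=> -[x y] /DeltaP [/= h1 h2 h3]; first nra.
  by rewrite !(mulr0, mulr1, addr0) => e; congr pair; nra.
- exists 0, (-1); split=> -[x y] /DeltaP [/= h1 h2 h3]; first nra.
  by rewrite !mul0r !add0r => e; congr pair; nra.
Qed.

Lemma hom_Delta_vertex rho t c z : 0 < rho -> hom rho t @` Delta `<=` Delta ->
  vertex c -> Delta z -> hom rho t z = c -> z = c.
Proof.
move=> rho_gt0 hom_sub c_vertex Dz hz.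
have [a [b [c_min c_unique]]] := vertex_exposed c_vertex.
have Dhc : Delta (hom rho t c) by apply: hom_sub; exists c => //; exact: vertex_Delta.
have le_cz := c_min _ Dz.
have := c_min _ Dhc; rewrite -{1}hz !lin_hom lerD2r (ler_pM2l rho_gt0) => le_zc.
by apply: c_unique => //; apply/eqP; rewrite eq_le le_zc le_cz.
Qed.

Definition lerp (p q : pt) (s : R) : pt := (1 - s) *: p + s *: q.

Lemma lerpE p q s : lerp p q s = ((1 - s) * p.1 + s * q.1, (1 - s) * p.2 + s * q.2).
Proof. by []. Qed.

Lemma Delta_lerp p q s : Delta p -> Delta q -> 0 <= s <= 1 -> Delta (lerp p q s).
Proof.
move=> /DeltaP[p1 p2 p3] /DeltaP[q1 q2 q3] /andP[s0 s1].
have s1' : 0 <= 1 - s by rewrite subr_ge0.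
apply/DeltaP; rewrite lerpE /=; split; nra.
Qed.

Lemma lerp_not_vertex c c' s : vertex c -> vertex c' -> c != c' -> 0 < s < 1 ->
  ~ vertex (lerp c c' s).
Proof.
have s3_pos := s3_gt0; move=> + + + /andP[s0 s1].
by case=> [[->|->]|->]; case=> [[->|->]|->]; rewrite ?eqxx // => _;
  rewrite lerpE /om_a /om_b /om_g /= => -[[]|] []; nra.
Qed.

Lemma hom_lerp rho t p q s :
  hom rho t (lerp p q s) = hom rho t p + (rho * s) *: (q - p).
Proof. by congr pair => /=; rewrite /GRing.scale /=; ring. Qed.

Lemma hom_common_vertex rho1 t1 rho2 t2 c : 0 < rho1 -> 0 < rho2 -> vertex c ->
  hom rho1 t1 c = hom rho2 t2 c -> exists x,
  [/\ (hom rho1 t1 @` Delta) x, (hom rho2 t2 @` Delta) x & ~ vertices (hom rho1 t1) x].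
Proof.
move=> rho1_gt0 rho2_gt0 c_vertex e.
pose c' := if c == oa then ob else oa.
have c'_vertex : vertex c' by rewrite /c'; case: ifP => _; [exact: ob_vertex|exact: oa_vertex].
have cc' : c != c' by rewrite /c'; case: ifP => [/eqP ->|/negbT //]; case: vertex_neq.
have rho12_gt0 : 0 < rho1 + rho2 by rewrite addr_gt0.
(* Near their common corner both copies contain the edge towards [c'], run
   through at speeds [rho1] and [rho2]. *)
pose s1 := rho2 / (2 * (rho1 + rho2)); pose s2 := rho1 / (2 * (rho1 + rho2)).
have s1_in : 0 < s1 < 1.
  by rewrite divr_gt0 ?mulr_gt0 //= ltr_pdivrMr ?mulr_gt0 // mul1r; lra.
have s2_in : 0 < s2 < 1.
  by rewrite divr_gt0 ?mulr_gt0 //= ltr_pdivrMr ?mulr_gt0 // mul1r; lra.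
have D_lerp s : 0 < s < 1 -> Delta (lerp c c' s).
  move=> /andP[s0 s1']; apply: Delta_lerp; try exact: vertex_Delta.
  by rewrite !ltW.
exists (hom rho1 t1 (lerp c c' s1)); split.
- by exists (lerp c c' s1) => //; exact: D_lerp.
- exists (lerp c c' s2); first exact: D_lerp.
  rewrite !hom_lerp e; congr (_ + _ *: _).
  by rewrite /s1 /s2; field; rewrite gt_eqF.
- rewrite verticesE => -[c'' c''_vertex /hom_inj e''].
  by apply: (lerp_not_vertex c_vertex c'_vertex cc' s1_in); rewrite -e''.
Qed.

End Triangle.

Arguments oa_vertex {R}.
Arguments ob_vertex {R}.
Arguments og_vertex {R}.

Section GasketIFS.
Variables (R : realType) (N : nat) (r : 'I_N -> R) (d : 'I_N -> (R * R)%type).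
Variable K : set (R * R).
Hypothesis IFS : gasket_IFS r d.
Hypothesis attractor : is_attractor r d K.
Local Notation pt := (R * R)%type.
Local Notation oa := (om_a R).
Local Notation ob := (om_b R).
Local Notation og := (om_g R).
Local Notation vertex := (vertices (@id pt)).
Local Notation Delta := (@Delta R).
Local Notation ph := (phi r d).

Lemma phi_hom j : ph j = hom (r j) (r j *: d j).
Proof. by apply: funext => z; congr pair; rewrite /= /GRing.scale /=; ring. Qed.

Lemma r_gt0 j : 0 < r j. Proof. by case: IFS => /(_ j) /andP[]. Qed.
Lemma r_lt1 j : r j < 1. Proof. by case: IFS => /(_ j) /andP[]. Qed.
Lemma phi_Delta j : ph j @` Delta `<=` Delta. Proof. by case: IFS => _ /(_ j). Qed.

Lemma phi_inj j : injective (ph j).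
Proof. by rewrite phi_hom; exact: hom_inj (r_gt0 j). Qed.

Lemma phi_overlap i j x : i != j ->
  (ph i @` Delta) x -> (ph j @` Delta) x -> vertices (ph i) x.
Proof. by case: IFS => _ _ /[apply] sub Di Dj; case: (sub x (conj Di Dj)). Qed.

Lemma phi_meet_vertex i i' v v' : i != i' -> Delta v -> Delta v' ->
  ph i v = ph i' v' -> vertex v.
Proof.
move=> ii' Dv Dv' e.
have := phi_overlap ii' (ex_intro2 _ _ v Dv erefl) (ex_intro2 _ _ v' Dv' (esym e)).
by rewrite verticesE => -[c c_vertex /phi_inj <-].
Qed.

Lemma phi_Delta_vertex j c z : vertex c -> Delta z -> ph j z = c -> z = c.
Proof.
by rewrite phi_hom; apply: hom_Delta_vertex (r_gt0 j) _; rewrite -phi_hom; exact: phi_Delta.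
Qed.

Lemma phi_vertex_fixed j c : vertex c -> (ph j @` Delta) c -> ph j c = c.
Proof. by move=> c_vertex [z Dz e]; rewrite -{1}(phi_Delta_vertex c_vertex Dz e). Qed.

Lemma phi_vertex_vertex j c c' : vertex c -> vertex c' -> ph j c = c' -> c = c'.
Proof. by move=> c_vertex c'_vertex; apply: phi_Delta_vertex => //; exact: vertex_Delta. Qed.

Lemma phi_vertex_inj i j c : vertex c -> ph i c = ph j c -> i = j.
Proof.
move=> c_vertex e; have [//|ij] := eqVneq i j.
have e' : hom (r i) (r i *: d i) c = hom (r j) (r j *: d j) c by rewrite -!phi_hom.
have [x [Dix Djx nvx]] := hom_common_vertex (r_gt0 i) (r_gt0 j) c_vertex e'.
rewrite -!phi_hom in Dix Djx nvx.
by case: nvx; exact: phi_overlap ij Dix Djx.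
Qed.

Lemma phi_fixed_unique j x y : ph j x = x -> ph j y = y -> x = y.
Proof. by rewrite phi_hom; apply: hom_fixed_unique; rewrite lt_eqF // r_lt1. Qed.

Definition rmax : R := \big[Num.max/0]_(j < N) r j.

Lemma r_le_rmax j : r j <= rmax.
Proof. by rewrite /rmax (bigD1 j) //= le_max lexx. Qed.

Lemma rmax_ge0 : 0 <= rmax.
Proof.
apply: (big_ind (fun x => 0 <= x)) => //.
- by move=> x y x0 y0; rewrite le_max x0.
- by move=> j _; exact: ltW (r_gt0 j).
Qed.

Lemma rmax_lt1 : rmax < 1.
Proof.
apply: (big_ind (fun x => x < 1)); first exact: ltr01.
- by move=> x y x1 y1; rewrite gt_max x1.
- by move=> j _; exact: r_lt1.
Qed.

Definition phiw (w : seq 'I_N) : pt -> pt := foldr (fun j f => ph j \o f) id w.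

Lemma phiw_hom w : exists rho t,
  [/\ 0 < rho, rho <= rmax ^+ size w & phiw w = hom rho t].
Proof.
elim: w => [|j w [rho [t [rho_gt0 rho_le phiwE]]]].
  by exists 1, 0; split => //; apply: funext => z; rewrite /hom scale1r addr0.
exists (r j * rho), (r j *: (t + d j)); split.
- by rewrite mulr_gt0 // r_gt0.
- by rewrite exprS ler_pM // ?r_le_rmax // ltW // r_gt0.
- apply: funext => z; rewrite [phiw _]/= phiwE phi_hom /=.
  by congr pair; rewrite /= /GRing.scale /=; ring.
Qed.

Lemma phiw_inj w : injective (phiw w).
Proof. by have [rho [t [rho_gt0 _ ->]]] := phiw_hom w; exact: hom_inj. Qed.

Lemma phiw_Delta w : phiw w @` Delta `<=` Delta.
Proof.
elim: w => [|j w IH] x [z Dz <-] //=.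
by apply: phi_Delta; exists (phiw w z) => //; apply: IH; exists z.
Qed.

Lemma phiw_Delta_vertex w c z : vertex c -> Delta z -> phiw w z = c -> z = c.
Proof.
have [rho [t [rho_gt0 _ phiwE]]] := phiw_hom w.
by rewrite phiwE; apply: hom_Delta_vertex rho_gt0 _; rewrite -phiwE; exact: phiw_Delta.
Qed.

Lemma phiw_meet_vertex w w' u u' : size w = size w' -> w != w' ->
  Delta u -> Delta u' -> phiw w u = phiw w' u' -> vertex u.
Proof.
elim: w w' u u' => [|i w IH] [|j w'] // u u' [sz] neq Du Du' /= e.
have [ij|ij] := eqVneq i j.
  by subst j; move/phi_inj: e; apply: IH => //; apply: contraNneq neq => ->.
have Dwu : Delta (phiw w u) by apply: phiw_Delta; exists u.
have Dwu' : Delta (phiw w' u') by apply: phiw_Delta; exists u'.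
have wu_vertex := phi_meet_vertex ij Dwu Dwu' e.
by rewrite (phiw_Delta_vertex wu_vertex Du erefl).
Qed.

Lemma K_compact : compact K. Proof. by case: attractor. Qed.

Lemma phi_K j u : K u -> K (ph j u).
Proof. by case: attractor => _ _ KE Ku; rewrite KE; exists j => //; exists u. Qed.

Lemma K_phi z : K z -> exists j u, K u /\ z = ph j u.
Proof. by case: attractor => _ _ KE; rewrite {1}KE => -[j _ [u Ku <-]]; exists j, u. Qed.

Lemma K_phiw n z : K z -> exists (w : n.-tuple 'I_N) u, K u /\ z = phiw w u.
Proof.
elim: n z => [|n IH] z Kz; first by exists [tuple], z.
have [j [u [Ku ->]]] := K_phi Kz.
have [w [v [Kv ->]]] := IH u Ku.
by exists [tuple of j :: w], v.
Qed.

Lemma K_lin_ub a b : exists M, forall z, K z -> lin a b z <= M.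
Proof.
have [M0 [_ M0_bound]] := compact_bounded K_compact.
have M1_gt : M0 < `|M0| + 1 by rewrite ltr_pwDr // ler_norm.
exists ((`|a| + `|b|) * (`|M0| + 1)) => z Kz.
have := M0_bound _ M1_gt z Kz; rewrite /= prod_normE ge_max => /andP[z1 z2].
rewrite (le_trans (ler_norm _)) // (le_trans (ler_normD _ _)) // !normrM mulrDl.
by rewrite lerD // ler_wpM2l.
Qed.

Lemma K_halfplane a b p : Delta p -> (forall z, Delta z -> lin a b z <= lin a b p) ->
  forall z, K z -> lin a b z <= lin a b p.
Proof.
move=> Dp p_max.
have [M M_ub] := K_lin_ub a b.
pose M' := Num.max (M - lin a b p) 0.
have M'_ge0 : 0 <= M' by rewrite le_max lexx orbT.
suff bound n z : K z -> lin a b z - lin a b p <= rmax ^+ n * M'.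
  move=> z Kz; rewrite -subr_le0.
  by apply: le0_geometric rmax_ge0 rmax_lt1 _ => n; exact: bound.
(* Since [ph j p] lies in [Delta], [lin a b - lin a b p] shrinks by the factor
   [r j] from [u] to [ph j u]. *)
elim: n z => [|n IH] z Kz.
  by rewrite expr0 mul1r le_max lerD2r M_ub.
have [j [u [Ku ->]]] := K_phi Kz.
have phi_p : lin a b (ph j p) <= lin a b p by apply: p_max; apply: phi_Delta; exists p.
have r_ge0 := ltW (r_gt0 j).
have : r j * (lin a b u - lin a b p) <= r j * (rmax ^+ n * M') by rewrite ler_wpM2l ?IH.
have : r j * (rmax ^+ n * M') <= rmax ^+ n.+1 * M'.
  by rewrite exprS -mulrA ler_wpM2r ?mulr_ge0 ?exprn_ge0 ?rmax_ge0 ?r_le_rmax.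
move: phi_p; rewrite phi_hom !lin_hom; lra.
Qed.

Lemma K_sub_Delta : K `<=` Delta.
Proof.
have s3_pos := s3_gt0 R.
move=> z Kz.
have halfplane p a b : vertex p -> (forall y, Delta y -> lin a b y <= lin a b p) ->
    lin a b z <= lin a b p.
  by move=> p_vertex p_max; exact: K_halfplane (vertex_Delta p_vertex) p_max z Kz.
have h1 : lin 0 (-1) z <= lin 0 (-1) oa.
  by apply: halfplane oa_vertex _ => y /DeltaP[y1 y2 y3]; rewrite /lin /=; nra.
have h2 : lin (- Num.sqrt 3) 1 z <= lin (- Num.sqrt 3) 1 oa.
  by apply: halfplane oa_vertex _ => y /DeltaP[y1 y2 y3]; rewrite /lin /=; nra.
have h3 : lin (Num.sqrt 3) 1 z <= lin (Num.sqrt 3) 1 ob.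
  by apply: halfplane ob_vertex _ => y /DeltaP[y1 y2 y3]; rewrite /lin /=; nra.
rewrite /lin /= in h1 h2 h3.
by apply/DeltaP; split; nra.
Qed.

Lemma phiw_lin_dist w a b u v : Delta u -> Delta v ->
  `|lin a b (phiw w u) - lin a b (phiw w v)| <= (`|a| + `|b|) * rmax ^+ size w.
Proof.
move=> Du Dv; have [rho [t [rho_gt0 rho_le ->]]] := phiw_hom w.
rewrite !lin_hom.
have -> : rho * lin a b u + lin a b t - (rho * lin a b v + lin a b t) =
  rho * (lin a b u - lin a b v) by ring.
rewrite normrM gtr0_norm // mulrC.
by rewrite ler_pM ?addr_ge0 ?normr_ge0 ?Delta_lin_dist // ltW.
Qed.

Section LinearInvariant.
Variables (I : finType) (X : I -> set pt) (rep : I -> pt) (a b : R).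
Hypothesis X_compact : forall i, compact (X i).
Hypothesis X_sub_K : forall i, X i `<=` K.
Hypothesis K_sub_X : K `<=` \bigcup_i X i.
Hypothesis rep_Delta : forall i, Delta (rep i).
Hypothesis X_meet_rep : forall i j z, X i z -> X j z -> rep i = rep j.
Hypothesis X_vertex_lin : forall i c, vertex c -> X i c -> lin a b c = lin a b (rep i).

Lemma phiw_vertex_lin w i c : vertex c -> X i c ->
  lin a b (phiw w c) = lin a b (phiw w (rep i)).
Proof.
move=> c_vertex Xc; have [rho [t [_ _ ->]]] := phiw_hom w.
by rewrite !lin_hom (X_vertex_lin c_vertex Xc).
Qed.

Lemma cells_meet_lin w w' i i' z : size w = size w' ->
  (phiw w @` X i) z -> (phiw w' @` X i') z ->
  lin a b (phiw w (rep i)) = lin a b (phiw w' (rep i')).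
Proof.
move=> sz [u Xu <-] [u' Xu' e].
have [ww'|ww'] := eqVneq w w'.
  by subst w'; move/phiw_inj: e => uu'; subst u'; rewrite (X_meet_rep Xu Xu').
have Du : Delta u by exact/K_sub_Delta/(X_sub_K Xu).
have Du' : Delta u' by exact/K_sub_Delta/(X_sub_K Xu').
have w'w : w' != w by rewrite eq_sym.
have u_vertex := phiw_meet_vertex sz ww' Du Du' (esym e).
have u'_vertex := phiw_meet_vertex (esym sz) w'w Du' Du e.
by rewrite -(phiw_vertex_lin _ u_vertex Xu) -(phiw_vertex_lin _ u'_vertex Xu') e.
Qed.

Lemma connected_lin_dist n C p q : connected C -> C `<=` K -> C p -> C q ->
  `|lin a b p - lin a b q| <= rmax ^+ n * (2 * (`|a| + `|b|)).
Proof.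
move=> Cconn CK Cp Cq.
pose F (k : n.-tuple 'I_N * I) := phiw k.1 @` X k.2.
pose lab (k : n.-tuple 'I_N * I) := lin a b (phiw k.1 (rep k.2)).
have [w0 [u [Ku pE]]] := K_phiw n (CK p Cp).
have [i0 _ Xu] := K_sub_X Ku.
have F_closed k : closed (F k).
  rewrite /F; have [rho [t [_ _ ->]]] := phiw_hom k.1.
  by apply: compact_closed; [exact: norm_hausdorff|exact: hom_compact].
have F_meet k k' z : F k z -> F k' z -> lab k = lab k'.
  by apply: cells_meet_lin; rewrite !size_tuple.
have CF : C `<=` \bigcup_k F k.
  move=> z /CK /(K_phiw n) [w [v [Kv ->]]].
  by have [i _ Xv] := K_sub_X Kv; exists (w, i) => //; exists v.
have [[w i] [v Xv <-] lab_eq] := connected_cover_label (i0 := (w0, i0))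
  F_closed F_meet Cconn CF Cp (ex_intro2 _ _ u Xu (esym pE)) Cq.
rewrite /lab /= in lab_eq.
have Dv : Delta v by exact/K_sub_Delta/(X_sub_K Xv).
have Du : Delta u by exact/K_sub_Delta/(X_sub_K Xu).
have := phiw_lin_dist w0 a b Du (rep_Delta i0).
have := phiw_lin_dist w a b Dv (rep_Delta i).
rewrite !size_tuple pE lab_eq /= => h1 h2.
have -> : lin a b (phiw w0 u) - lin a b (phiw w v) =
  (lin a b (phiw w0 u) - lin a b (phiw w0 (rep i0))) -
  (lin a b (phiw w v) - lin a b (phiw w0 (rep i0))) by ring.
rewrite (le_trans (ler_normB _ _)) //; lra.
Qed.

Lemma connected_lin_eq C p q : connected C -> C `<=` K -> C p -> C q ->
  lin a b p = lin a b q.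
Proof.
move=> Cconn CK Cp Cq; apply/eqP; rewrite -subr_eq0 -normr_eq0 eq_le normr_ge0 andbT.
apply: (le0_geometric (M := 2 * (`|a| + `|b|)) rmax_ge0 rmax_lt1) => n.
exact: connected_lin_dist Cconn CK Cp Cq.
Qed.

End LinearInvariant.

Definition hlink : rel 'I_N := fun i j => hnext r d i j || hnext r d j i.

Lemma hlink_sym : symmetric hlink.
Proof. by move=> i j; rewrite /hlink orbC. Qed.

Lemma phi_link k k' c c' : c = oa \/ c = ob -> c' = oa \/ c' = ob ->
  ph k c = ph k' c' -> k = k' \/ hlink k k'.
Proof.
case=> -> [] -> e; rewrite /hlink /hnext.
- by left; exact: phi_vertex_inj oa_vertex e.
- by right; rewrite e eqxx orbT.
- by right; rewrite e eqxx.
- by left; exact: phi_vertex_inj ob_vertex e.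
Qed.

Lemma hnext_no_pred alpha j : ph alpha oa = oa -> ~~ hnext r d j alpha.
Proof.
move=> alpha_fixed; apply/negP => /eqP; rewrite alpha_fixed => e.
by case: (vertex_neq R); rewrite (phi_vertex_vertex ob_vertex oa_vertex e) eqxx.
Qed.

Lemma hnext_pred_inj j j' k : hnext r d j k -> hnext r d j' k -> j = j'.
Proof. by move=> /eqP e /eqP e'; exact: phi_vertex_inj ob_vertex (etrans e (esym e')). Qed.

Lemma connect_hlink_hnext alpha j : ph alpha oa = oa ->
  connect hlink alpha j -> connect (hnext r d) alpha j.
Proof.
(* [alpha] has no predecessor and predecessors are unique, so a backward step
   of an [hlink]-path from [alpha] undoes the previous forward step. *)
move=> alpha_fixed /connectP [p]; elim/last_ind: p j => [|p y IH] j /=; first by move=> _ ->.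
rewrite rcons_path last_rcons => /andP[/IH /(_ erefl) av /orP[vy|yv]] ->.
  exact: connect_trans av (connect1 vy).
have [ev|nav] := eqVneq alpha (last alpha p).
  by move: yv; rewrite -ev (negbTE (hnext_no_pred y alpha_fixed)).
have [u au uv] := connect_last_edge av nav.
by rewrite -(hnext_pred_inj uv yv).
Qed.

Definition chain_vertex (x : 'I_N) (z : pt) : Prop :=
  exists2 k, connect hlink x k & z = ph k oa \/ z = ph k ob.

Lemma chain_vertexE x j c : c = oa \/ c = ob ->
  chain_vertex x (ph j c) <-> connect hlink x j.
Proof.
move=> c_base; split; last by move=> xj; exists j => //; case: c_base => ->; [left|right].
case=> k xk e; have [<-|kj] : k = j \/ hlink k j.
- by case: e => /esym e; apply: phi_link e => //; [left|right].
- exact: xk.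
- by move: (connect_closed (sym_connect_sym hlink_sym) x kj); rewrite !inE => <-.
Qed.

(* [top] selects the maps whose copies of [Delta] are isolated from the other
   copies: the map fixing [og] under the top isolated condition, and no map
   when [og] is not in [K]. *)
Definition top_split (top : pred 'I_N) : Prop :=
  [/\ forall j k, top j -> ~~ top k -> ph j @` Delta `&` ph k @` Delta = set0,
      K og -> exists2 g, top g & ph g og = og,
      forall j, ph j oa = oa -> ~~ top j &
      forall j, ph j ob = ob -> ~~ top j].

Lemma top_split_exists : top_isolated r d K \/ ~ K og -> exists top, top_split top.
Proof.
case=> [[Kog [g [g_fixed g_isolated]]]|not_Kog]; last by exists pred0; split.
exists (pred1 g); split => /=.
- by move=> j k /eqP -> kg; apply: g_isolated.
- by move=> _; exists g.
- move=> j j_fixed; apply/eqP => jg; subst j.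
  by case: (vertex_neq R); rewrite (phi_fixed_unique g_fixed j_fixed) eqxx.
- move=> j j_fixed; apply/eqP => jg; subst j.
  by case: (vertex_neq R); rewrite (phi_fixed_unique g_fixed j_fixed) eqxx.
Qed.

Section TopSplit.
Variable top : pred 'I_N.
Hypothesis top_spec : top_split top.

Definition part (b : bool) : set pt := \bigcup_(j in [set j | top j == b]) ph j @` K.

Lemma part_compact b : compact (part b).
Proof.
rewrite /part -bigsetU_fset_set; last exact: finite_finset.
by apply: bigsetU_compact => j _; rewrite phi_hom; apply: hom_compact; exact: K_compact.
Qed.

Lemma part_sub_K b : part b `<=` K.
Proof. by move=> z [j _ [u Ku <-]]; exact: phi_K. Qed.

Lemma K_sub_part z : K z -> exists b, part b z.
Proof.
by case/K_phi => j [u [Ku ->]]; exists (top j); exists j; [rewrite /= eqxx|exists u].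
Qed.

Lemma part_disjoint b b' z : part b z -> part b' z -> b = b'.
Proof.
move=> [j /eqP <- [u Ku <-]] [k /eqP <- [v Kv e]].
have Dj : (ph j @` Delta) (ph j u) by exists u => //; exact: K_sub_Delta.
have Dk : (ph k @` Delta) (ph j u) by rewrite -e; exists v => //; exact: K_sub_Delta.
case: top_spec => disj _ _ _.
case: (boolP (top j)) => tj; case: (boolP (top k)) => tk //.
- by have := conj Dj Dk; rewrite -[_ /\ _]/((_ `&` _) _) disj.
- by have := conj Dk Dj; rewrite -[_ /\ _]/((_ `&` _) _) disj.
Qed.

Lemma part_false_vertex c : vertex c -> part false c -> c = oa \/ c = ob.
Proof.
case=> [[->|->]|->] Pc; [by left|by right|exfalso].
case: top_spec => disj /(_ (part_sub_K Pc)) [g tg g_fixed] _ _.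
case: Pc => j /eqP tj [u Ku e].
have ntj : ~~ top j by rewrite tj.
suff : (ph g @` Delta `&` ph j @` Delta) og by rewrite disj.
split; first by exists og => //; exact: vertex_Delta og_vertex.
by exists u => //; exact: K_sub_Delta.
Qed.

Lemma part_true_vertex c : vertex c -> part true c -> c = og.
Proof.
move=> c_vertex [j /eqP tj [u Ku e]].
have j_fixed : ph j c = c.
  by apply: phi_vertex_fixed => //; exists u => //; exact: K_sub_Delta.
case: top_spec => _ _ oa_base ob_base.
case: c_vertex j_fixed => [[->|->]|->] // fixed.
- by move: (oa_base _ fixed); rewrite tj.
- by move: (ob_base _ fixed); rewrite tj.
Qed.

Lemma connected_horizontal C p q : connected C -> C `<=` K -> C p -> C q -> p.2 = q.2.
Proof.
move=> Cconn CK Cp Cq.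
have : lin 0 1 p = lin 0 1 q.
  apply: (@connected_lin_eq _ part (fun b => if b then og else oa)) Cconn CK Cp Cq.
  - exact: part_compact.
  - exact: part_sub_K.
  - by move=> z /K_sub_part [b Pb]; exists b.
  - by case; apply: vertex_Delta; [exact: og_vertex|exact: oa_vertex].
  - by move=> b b' z Pb Pb'; rewrite (part_disjoint Pb Pb').
  - case=> c c_vertex Pc; first by rewrite (part_true_vertex c_vertex Pc).
    by case: (part_false_vertex c_vertex Pc) => ->; rewrite /lin /om_a /om_b /=; ring.
by rewrite /lin !mul0r !mul1r !add0r.
Qed.

Section Chains.
Variables alpha beta : 'I_N.
Hypothesis alpha_fixed : ph alpha oa = oa.
Hypothesis beta_fixed : ph beta ob = ob.
Hypothesis alpha_beta_apart : ~ connect hlink alpha beta.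

Definition chain_rep (z : pt) : pt :=
  if `[< chain_vertex alpha z >] then oa
  else if `[< chain_vertex beta z >] then ob else og.

Lemma chain_rep_vertex c : vertex c -> chain_rep c = c.
Proof.
rewrite /chain_rep; case=> [[->|->]|->].
- have : chain_vertex alpha oa by exists alpha; [exact: connect0|left; rewrite alpha_fixed].
  by move/asboolT => ->.
- have not_alpha : ~ chain_vertex alpha ob.
    case=> k ak [] e.
    + by case: (vertex_neq R); rewrite (phi_vertex_vertex oa_vertex ob_vertex (esym e)) eqxx.
    + apply: alpha_beta_apart.
      by rewrite -(phi_vertex_inj ob_vertex (etrans (esym e) (esym beta_fixed))).
  have : chain_vertex beta ob by exists beta; [exact: connect0|right; rewrite beta_fixed].
  by move/asboolT => ->; rewrite (asboolF not_alpha).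
- have not_chain x : ~ chain_vertex x og.
    case=> k _ [] /esym /phi_vertex_vertex e; case: (vertex_neq R).
    + by rewrite (e oa_vertex og_vertex) eqxx.
    + by rewrite (e ob_vertex og_vertex) eqxx.
  by rewrite !asboolF.
Qed.

Lemma chain_rep_in_vertex z : vertex (chain_rep z).
Proof.
rewrite /chain_rep; case: ifP => _; first exact: oa_vertex.
by case: ifP => _; [exact: ob_vertex|exact: og_vertex].
Qed.

(* A base cell [ph j @` part false] is represented through its vertex [ph j oa]
   (equivalently [ph j ob]), a top cell [ph j @` part true] through [ph j og]. *)
Definition cell_rep (k : 'I_N * bool) : pt := chain_rep (ph k.1 (if k.2 then og else oa)).

Lemma cell_rep_vertex j b c : vertex c -> part b c -> cell_rep (j, b) = chain_rep (ph j c).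
Proof.
move=> c_vertex; case: b => Pc; first by rewrite /cell_rep /= (part_true_vertex c_vertex Pc).
have c_base := part_false_vertex c_vertex Pc.
have oa_base : oa = oa \/ oa = ob by left.
rewrite /cell_rep /chain_rep /= !(asbool_equiv_eq (chain_vertexE _ _ c_base)).
by rewrite !(asbool_equiv_eq (chain_vertexE _ _ oa_base)).
Qed.

Lemma cells_meet_rep j b k b' z : (ph j @` part b) z -> (ph k @` part b') z ->
  cell_rep (j, b) = cell_rep (k, b').
Proof.
move=> [u Pu <-] [u' Pu' e].
have [jk|jk] := eqVneq j k.
  by subst k; move/phi_inj: e => uu'; subst u'; rewrite (part_disjoint Pu Pu').
have Du : Delta u by exact/K_sub_Delta/(part_sub_K Pu).
have Du' : Delta u' by exact/K_sub_Delta/(part_sub_K Pu').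
have kj : k != j by rewrite eq_sym.
have u_vertex := phi_meet_vertex jk Du Du' (esym e).
have u'_vertex := phi_meet_vertex kj Du' Du e.
by rewrite (cell_rep_vertex _ u_vertex Pu) (cell_rep_vertex _ u'_vertex Pu') e.
Qed.

Lemma cell_vertex_rep j b c : vertex c -> (ph j @` part b) c -> c = cell_rep (j, b).
Proof.
move=> c_vertex [u Pu e].
have uc := phi_Delta_vertex c_vertex (K_sub_Delta (part_sub_K Pu)) e; subst u.
by rewrite (cell_rep_vertex _ c_vertex Pu) e chain_rep_vertex.
Qed.

Lemma connected_trivial C p q : connected C -> C `<=` K -> C p -> C q -> p = q.
Proof.
move=> Cconn CK Cp Cq.
have lin_eq a b : lin a b p = lin a b q.
  apply: (@connected_lin_eq _ (fun k => ph k.1 @` part k.2) cell_rep) Cconn CK Cp Cq.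
  - by move=> k; rewrite phi_hom; apply: hom_compact; exact: part_compact.
  - by move=> k z [u Pu <-]; apply: phi_K; exact: part_sub_K Pu.
  - move=> z /K_phi [j [u [Ku ->]]]; have [s Ps] := K_sub_part Ku.
    by exists (j, s) => //; exists u.
  - by move=> k; apply: vertex_Delta; exact: chain_rep_in_vertex.
  - by move=> [j s] [k s'] z; exact: cells_meet_rep.
  - by move=> [j s] c c_vertex /(cell_vertex_rep c_vertex) <-.
have := lin_eq 1 0; have := lin_eq 0 1; rewrite /lin !mul1r !mul0r !addr0 !add0r.
by move=> e2 e1; rewrite [p]surjective_pairing [q]surjective_pairing e1 e2.
Qed.

End Chains.

End TopSplit.

End GasketIFS.

Unset Implicit Arguments. Set Strict Implicit.

Theorem lemmaA1 (R : realType) (N : nat) (r : 'I_N -> R) (d : 'I_N -> (R * R))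
    (K : set ((R * R))) (alpha beta : 'I_N) :
  gasket_IFS r d -> is_attractor r d K ->
  K (om_a R) -> K (om_b R) ->
  phi r d alpha (om_a R) = om_a R -> phi r d beta (om_b R) = om_b R ->
  (top_isolated r d K \/ ~ K (om_g R)) ->
  (forall x, K x -> (exists y, y != x /\ connected_component K x y) ->
     line_segment (connected_component K x)) /\
  (~ same_horizontal_block r d alpha beta -> totally_disconnected K).
Proof.
move=> IFS attractor _ _ alpha_fixed beta_fixed top_cond.
have [top top_spec] := top_split_exists IFS top_cond.
have Kcl : closed K.
  by apply: compact_closed; [exact: norm_hausdorff|exact: K_compact attractor].
have comp_conn x : connected (connected_component K x) := @component_connected _ K x.
have comp_sub x : connected_component K x `<=` K := @connected_component_sub _ K x.
split.
- move=> x Kx [y [yx Cy]]; have Cx := connected_component_refl Kx.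
  apply: (horizontal_continuum_segment _ _ _ Cx Cy yx) => //.
  + exact: subclosed_compact (component_closed Kcl) (K_compact attractor) (comp_sub x).
  + move=> z Cz; apply/esym.
    exact: (connected_horizontal IFS attractor top_spec (comp_conn x) (comp_sub x) Cx Cz).
- move=> not_block x Kx; apply/seteqP; split=> [z Cz|_ ->]; last first.
    exact: connected_component_refl.
  have apart : ~ connect (hlink r d) alpha beta.
    by move/(connect_hlink_hnext IFS alpha_fixed)/connect_same_horizontal_block.
  apply/esym; apply: (connected_trivial IFS attractor top_spec alpha_fixed beta_fixed apart
    (comp_conn x) (comp_sub x)) Cz.
  exact: connected_component_refl.
Qed.
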